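(* Let $(D_-,D_+,H)$ be a periodic upwind DP SBP triple, $D=\tfrac12(D_++D_-)$, $g>0$, and $\gamma_1,\gamma_2\ge0$. Let $\mathbf h,\mathbf m:[0,T]\to\mathbb{R}^N$ be differentiable with $h_j(t)>0$ for all $j,t$, and set $\mathbf u=\mathbf m/\mathbf h$ (entrywise). Suppose $\mathbf U=(\mathbf h;\mathbf m)$ satisfies the semi-discrete shallow water scheme $$\partial_t\mathbf h+D(\mathbf h\circ\mathbf u)=\tfrac{\gamma_1}{2}(D_+-D_-)\mathbf g_1,\qquad \partial_t\mathbf m+\tfrac12 D(\mathbf h\circ\mathbf u\circ\mathbf u)+\tfrac12\mathbf u\circ D(\mathbf h\circ\mathbf u)+\tfrac12(\mathbf h\circ\mathbf u)\circ D\mathbf u+g\,\mathbf h\circ D\mathbf h=\tfrac{\gamma_2}{2}(D_+-D_-)\mathbf g_2,$$ where $\mathbf g_1=g\mathbf h-\tfrac12\mathbf u\circ\mathbf u$, $\mathbf g_2=\mathbf u$. Let $E_h(t)=\sum_{j=1}^N h_j^{H}\big(\tfrac12 h_j u_j^2+\tfrac12 g h_j^2\big)$ where $h^H_j$ are the diagonal entries of $H$. Then (1) $\frac{d}{dt}E_h=\tfrac12\sum_{i=1}^2\gamma_i\langle\mathbf g_i,(D_+-D_-)\mathbf g_i\rangle_H\le0$, with $E_h$ constant if $\gamma_1=\gamma_2=0$; (2) $\frac{d}{dt}\langle\mathbf 1,\mathbf h\rangle_H=0$ and $\frac{d}{dt}\langle\mathbf 1,\mathbf m\rangle_H=0$ (total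 mass and total momentum are conserved).
   Context: Fix $N\ge2$, $H=\mathrm{diag}(h^H_1,\dots,h^H_N)$ with $h^H_j>0$, $\langle \mathbf f,\mathbf g\rangle_H=\mathbf f^TH\mathbf g$, $\mathbf 1=(1,\dots,1)^T\in\mathbb{R}^N$; $\circ$ is the entrywise product. A triple $(D_-,D_+,H)$ with $D_\pm\in\mathbb{R}^{N\times N}$ is a periodic upwind DP SBP triple if (i) $\langle D_+\mathbf f,\mathbf g\rangle_H+\langle \mathbf f,D_-\mathbf g\rangle_H=0$ for all $\mathbf f,\mathbf g\in\mathbb{R}^N$; (ii) $\langle \mathbf f,(D_+-D_-)\mathbf f\rangle_H\le0$ for all $\mathbf f\in\mathbb{R}^N$; (iii) $D_+\mathbf 1=D_-\mathbf 1=\mathbf 0$. Here $\mathbf h$ is the water height, $\mathbf m=\mathbf h\circ\mathbf u$ the momentum, $g$ the gravitational constant. *)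

From HB Require Import structures.
From mathcomp Require Import all_boot all_order all_algebra.
From mathcomp Require Import all_classical all_reals.
From mathcomp Require Import topology normedtype derive.
Set Implicit Arguments. Unset Strict Implicit. Unset Printing Implicit Defensive.
Import Order.TTheory GRing.Theory Num.Theory numFieldNormedType.Exports.
Local Open Scope ring_scope.

Section Defs.
Context {R : realType} {N : nat}.

Definition hprod (u v : 'cV[R]_N) : 'cV[R]_N := \col_i (u i 0 * v i 0).
Definition hdiv (u v : 'cV[R]_N) : 'cV[R]_N := \col_i (u i 0 / v i 0).

Definition ipH (hH : 'rV[R]_N) (f g : 'cV[R]_N) : R :=
  (f^T *m diag_mx hH *m g) 0 0.

Definition ones : 'cV[R]_N := const_mx 1.

Definition upwind_SBP (Dm Dp : 'M[R]_N) (hH : 'rV[R]_N) : Prop :=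
  [/\ forall f g : 'cV[R]_N, ipH hH (Dp *m f) g + ipH hH f (Dm *m g) = 0,
      forall f : 'cV[R]_N, ipH hH f ((Dp - Dm) *m f) <= 0,
      Dp *m ones = 0 & Dm *m ones = 0].

Definition dvec (v : R -> 'cV[R]_N) (t : R) : 'cV[R]_N :=
  \col_j (derive1 (fun s => v s j 0) t).

End Defs.

From HB Require Import structures.
From mathcomp Require Import all_boot all_order all_algebra.
From mathcomp Require Import all_classical all_reals.
From mathcomp Require Import topology normedtype derive realfun.
From mathcomp Require Import ring lra.
Import Order.TTheory GRing.Theory Num.Theory numFieldNormedType.Exports.
Local Open Scope ring_scope.

(* Summation by parts (i) makes the central operator D = (D_+ + D_-)/2
   skew-adjoint for <.,.>_H.  The energy density e(h, m) = m^2/(2h) + g h^2/2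
   has gradient (g h - u^2/2, u) = (g1, g2), so dE/dt is obtained by pairing
   the continuity equation with g1 and the momentum equation with u.  In that
   pairing the split form of the momentum flux makes every central term cancel
   against another one by skew-adjointness, leaving only the upwind
   dissipation terms, which are nonpositive by (ii).  Pairing with 1 instead
   gives conservation, since D_+ 1 = D_- 1 = 0 transfers through (i). *)

Section InnerProduct.
Context {R : realType} {N : nat} (hH : 'rV[R]_N).
Implicit Types a b c f k l : 'cV[R]_N.

Lemma ipHE f k : ipH hH f k = \sum_j f j 0 * hH 0 j * k j 0.
Proof. by rewrite /ipH mul_mx_diag mxE; apply: eq_bigr => j _; rewrite !mxE. Qed.

Lemma ipHC f k : ipH hH f k = ipH hH k f.
Proof. by rewrite !ipHE; apply: eq_bigr => j _; ring. Qed.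

Lemma ipHDr f k l : ipH hH f (k + l) = ipH hH f k + ipH hH f l.
Proof. by rewrite !ipHE -big_split; apply: eq_bigr => j _; rewrite !mxE mulrDr. Qed.

Lemma ipHBr f k l : ipH hH f (k - l) = ipH hH f k - ipH hH f l.
Proof. by rewrite !ipHE -sumrB; apply: eq_bigr => j _; rewrite !mxE; ring. Qed.

Lemma ipHZr f k (r : R) : ipH hH f (r *: k) = r * ipH hH f k.
Proof. by rewrite !ipHE mulr_sumr; apply: eq_bigr => j _; rewrite !mxE; ring. Qed.

Lemma ipH0r f : ipH hH f 0 = 0.
Proof. by rewrite -(scale0r 0) ipHZr mul0r. Qed.

Lemma ipHBl f k l : ipH hH (k - l) f = ipH hH k f - ipH hH l f.
Proof. by rewrite ipHC ipHBr !(ipHC f). Qed.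

Lemma ipHZl f k (r : R) : ipH hH (r *: k) f = r * ipH hH k f.
Proof. by rewrite ipHC ipHZr ipHC. Qed.

Lemma ipH_hprodr a b c : ipH hH a (hprod b c) = ipH hH (hprod a b) c.
Proof. by rewrite !ipHE; apply: eq_bigr => j _; rewrite !mxE; ring. Qed.

Lemma ipH_ones_hprod a b : ipH hH ones (hprod a b) = ipH hH a b.
Proof. by rewrite !ipHE; apply: eq_bigr => j _; rewrite !mxE; ring. Qed.

End InnerProduct.

Lemma hprodC {R : realType} {N : nat} (a b : 'cV[R]_N) : hprod a b = hprod b a.
Proof. by apply/matrixP => i j; rewrite !mxE mulrC. Qed.

Lemma hprodA {R : realType} {N : nat} (a b c : 'cV[R]_N) :
  hprod a (hprod b c) = hprod (hprod a b) c.
Proof. by apply/matrixP => i j; rewrite !mxE mulrA. Qed.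

Section UpwindSBP.
Context {R : realType} {N : nat} {Dm Dp : 'M[R]_N} {hH : 'rV[R]_N}.
Hypothesis sbp : upwind_SBP Dm Dp hH.
Local Notation D := (2^-1 *: (Dp + Dm)).
Implicit Types a b c f k : 'cV[R]_N.

Lemma ipH_centralC f k : ipH hH (D *m f) k = - ipH hH f (D *m k).
Proof.
have [adj _ _ _] := sbp.
rewrite -!scalemxAl !mulmxDl ipHZl ipHZr ipHC !ipHDr.
have := adj f k; have := adj k f.
rewrite (ipHC hH k (Dm *m f)) (ipHC hH (Dp *m k) f) (ipHC hH (Dp *m f) k); lra.
Qed.

Lemma ipH_central_diag f : ipH hH f (D *m f) = 0.
Proof. by have := ipH_centralC f f; rewrite ipHC; lra. Qed.

Lemma ipH_hprod_central a b c :
  ipH hH a (hprod b (D *m c)) = - ipH hH c (D *m hprod a b).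
Proof. by rewrite ipH_hprodr ipHC ipH_centralC. Qed.

Lemma ipH_ones_central f : ipH hH ones (D *m f) = 0.
Proof.
have [_ _ Dp1 Dm1] := sbp.
by rewrite ipHC ipH_centralC -scalemxAl mulmxDl Dp1 Dm1 addr0 scaler0 ipH0r oppr0.
Qed.

Lemma ipH_ones_dissipation f : ipH hH ones ((Dp - Dm) *m f) = 0.
Proof.
have [adj _ Dp1 Dm1] := sbp.
have := adj ones f; have := adj f ones.
rewrite mulmxBl ipHBr Dp1 Dm1 (ipHC hH 0) !ipH0r (ipHC hH (Dp *m f)); lra.
Qed.

Context {g gamma1 gamma2 : R} {h u dh dm : 'cV[R]_N}.
Local Notation g1 := (g *: h - 2^-1 *: hprod u u).

Hypothesis mass_eq :
  dh + D *m hprod h u = (gamma1 / 2) *: ((Dp - Dm) *m g1).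
Hypothesis momentum_eq :
  dm + 2^-1 *: (D *m hprod h (hprod u u)) + 2^-1 *: hprod u (D *m hprod h u)
     + 2^-1 *: hprod (hprod h u) (D *m u) + g *: hprod h (D *m h)
  = (gamma2 / 2) *: ((Dp - Dm) *m u).

Lemma mass_rate : ipH hH ones dh = 0.
Proof.
have := congr1 (ipH hH ones) mass_eq.
by rewrite ipHDr ipHZr ipH_ones_central ipH_ones_dissipation addr0 mulr0.
Qed.

Lemma momentum_rate : ipH hH ones dm = 0.
Proof.
have := congr1 (ipH hH ones) momentum_eq.
rewrite !ipHDr !ipHZr ipH_ones_central ipH_ones_dissipation !ipH_ones_hprod.
rewrite ipH_central_diag [ipH _ (hprod h u) _]ipHC ipH_centralC; lra.
Qed.

Lemma energy_rate :
  ipH hH u dm + ipH hH g1 dh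
  = 2^-1 * (gamma1 * ipH hH g1 ((Dp - Dm) *m g1)
            + gamma2 * ipH hH u ((Dp - Dm) *m u)).
Proof.
have huu : hprod u (hprod h u) = hprod h (hprod u u).
  by rewrite hprodA (hprodC u h) -hprodA.
have := congr1 (ipH hH g1) mass_eq.
rewrite ipHDr ipHZr [ipH _ _ (D *m _)]ipHBl !ipHZl.
have := congr1 (ipH hH u) momentum_eq.
rewrite !ipHDr !ipHZr.
rewrite [ipH _ u (hprod (hprod _ _) _)]ipH_hprod_central huu.
rewrite [ipH _ u (hprod h _)]ipH_hprod_central (hprodC u h).
rewrite [ipH _ u (hprod u _)]ipH_hprodr.
lra.
Qed.
End UpwindSBP.

Lemma is_derive_energy_density {R : realType} (g : R) {f k : R -> R}
    {t df dk : R} :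
  is_derive t 1 f df -> is_derive t 1 k dk -> f t != 0 ->
  is_derive t 1 (fun s => 2^-1 * f s * (k s / f s) ^+ 2 + 2^-1 * g * f s ^+ 2)
    (k t / f t * dk + (g * f t - 2^-1 * (k t / f t) ^+ 2) * df).
Proof.
move=> Hf Hk ft0.
have Hfi := is_deriveV ft0 Hf.
have -> : (fun s => 2^-1 * f s * (k s / f s) ^+ 2 + 2^-1 * g * f s ^+ 2)
   = cst (2^-1) * f * (k * (fun s => (f s)^-1)) ^+ 2 + cst (2^-1 * g) * f ^+ 2.
  by apply/funext => s /=; rewrite !expr2.
apply: is_derive_eq; rewrite !fctE !scaler0 !addr0 /GRing.scale /=.
by field.
Qed.

Section Derivatives.
Context {R : realType} {N : nat} (hH : 'rV[R]_N).

Lemma is_derive_ipH (c : 'cV[R]_N) (v : R -> 'cV[R]_N) t :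
  (forall j, derivable (fun s => v s j 0) t 1) ->
  is_derive t 1 (fun s => ipH hH c (v s)) (ipH hH c (dvec v t)).
Proof.
move=> dv; rewrite ipHE.
have -> : (fun s => ipH hH c (v s))
          = \sum_j (fun s => c j 0 * hH 0 j * v s j 0).
  by apply/funext => s; rewrite fct_sumE ipHE.
apply: is_derive_sum => j; rewrite mxE derive1E.
exact: is_deriveZ (derivableP (dv j)).
Qed.

Definition energy (g : R) (h m : R -> 'cV[R]_N) (t : R) : R :=
  \sum_j hH 0 j * (2^-1 * h t j 0 * (hdiv (m t) (h t) j 0) ^+ 2
                   + 2^-1 * g * (h t j 0) ^+ 2).

Lemma is_derive_energy (g : R) (h m : R -> 'cV[R]_N) t :
  (forall j, h t j 0 != 0) ->
  (forall j, derivable (fun s => h s j 0) t 1) ->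
  (forall j, derivable (fun s => m s j 0) t 1) ->
  let u := hdiv (m t) (h t) in
  is_derive t 1 (energy g h m)
    (ipH hH u (dvec m t) + ipH hH (g *: h t - 2^-1 *: hprod u u) (dvec h t)).
Proof.
move=> h0 dh dm u.
pose e j s := 2^-1 * h s j 0 * (m s j 0 / h s j 0) ^+ 2 + 2^-1 * g * h s j 0 ^+ 2.
have -> : energy g h m = \sum_j hH 0 j \*: e j.
  by apply/funext => s; rewrite fct_sumE; apply: eq_bigr => j _; rewrite mxE.
have -> : ipH hH u (dvec m t) + ipH hH (g *: h t - 2^-1 *: hprod u u) (dvec h t)
  = \sum_j hH 0 j * (m t j 0 / h t j 0 * 'D_1 (fun s => m s j 0) t
      + (g * h t j 0 - 2^-1 * (m t j 0 / h t j 0) ^+ 2) * 'D_1 (fun s => h s j 0) t).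
  rewrite !ipHE -big_split /=; apply: eq_bigr => j _.
  by rewrite /u !mxE !derive1E; ring.
apply: is_derive_sum => j; apply: is_deriveZ.
exact: is_derive_energy_density (derivableP (dh j)) (derivableP (dm j)) (h0 j).
Qed.

End Derivatives.

Lemma is_derive0_cst_itv {R : realType} (f : R -> R) (a b : R) :
  (forall t, t \in `[a, b] -> is_derive t 1 f 0) ->
  {in `[a, b] &, forall x y, f x = f y}.
Proof.
move=> f'0; suff le_cst x y : x \in `[a, b] -> y \in `[a, b] -> x <= y -> f x = f y.
  by move=> x y xab yab; case: (leP x y) => [|/ltW] xy; [|symmetry]; exact: le_cst.
move=> xab yab xy.
have sub z : z \in `[x, y] -> z \in `[a, b].
  move: xab yab; rewrite !in_itv /= => /andP[ax _] /andP[_ yb] /andP[xz zy].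
  by rewrite (le_trans ax xz) (le_trans zy yb).
have f'0xy z : z \in `]x, y[ -> is_derive z 1 f ((fun=> 0) z).
  by move/subset_itv_oo_cc/sub/f'0.
have cf : {within `[x, y], continuous f}%classic.
  by apply: derivable_within_continuous => z /sub/f'0 [].
have [c _] := MVT_segment xy f'0xy cf.
by rewrite mul0r => /eqP; rewrite subr_eq0 => /eqP.
Qed.

Theorem mainTheorem10 (R : realType) (N : nat) (Dm Dp : 'M[R]_N)
  (hH : 'rV[R]_N) (g gamma1 gamma2 T : R)
  (h m : R -> 'cV[R]_N) :
  (2 <= N)%N ->
  (forall j, 0 < hH 0 j) ->
  upwind_SBP Dm Dp hH ->
  0 < g -> 0 <= gamma1 -> 0 <= gamma2 ->
  (forall t, t \in `[0, T] -> forall j,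
     derivable (fun s => h s j 0) t 1 /\ derivable (fun s => m s j 0) t 1) ->
  (forall t, t \in `[0, T] -> forall j, 0 < h t j 0) ->
  let D := 2^-1 *: (Dp + Dm) in
  let u := fun t => hdiv (m t) (h t) in
  let g1 := fun t => g *: h t - 2^-1 *: hprod (u t) (u t) in
  let g2 := u in
  (forall t, t \in `[0, T] ->
     dvec h t + D *m hprod (h t) (u t)
     = (gamma1 / 2) *: ((Dp - Dm) *m g1 t)) ->
  (forall t, t \in `[0, T] ->
     dvec m t
     + 2^-1 *: (D *m hprod (h t) (hprod (u t) (u t)))
     + 2^-1 *: hprod (u t) (D *m hprod (h t) (u t))
     + 2^-1 *: hprod (hprod (h t) (u t)) (D *m u t)
     + g *: hprod (h t) (D *m h t)
     = (gamma2 / 2) *: ((Dp - Dm) *m g2 t)) ->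
  let E := fun t => \sum_j hH 0 j *
             (2^-1 * h t j 0 * (u t j 0) ^+ 2 + 2^-1 * g * (h t j 0) ^+ 2) in
  (forall t, t \in `[0, T] ->
     let dE := 2^-1 * (gamma1 * ipH hH (g1 t) ((Dp - Dm) *m g1 t)
                       + gamma2 * ipH hH (g2 t) ((Dp - Dm) *m g2 t)) in
     is_derive t 1 E dE /\ dE <= 0) /\
  (gamma1 = 0 -> gamma2 = 0 ->
     forall t1 t2, t1 \in `[0, T] -> t2 \in `[0, T] -> E t1 = E t2) /\
  (forall t, t \in `[0, T] ->
     is_derive t 1 (fun s => ipH hH ones (h s)) 0 /\
     is_derive t 1 (fun s => ipH hH ones (m s)) 0).
Proof.
move=> _ _ sbp _ ge0_gamma1 ge0_gamma2 dhm hpos D u g1 g2 mass_eq momentum_eq E.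
have dE t : t \in `[0, T] -> is_derive t 1 E
    (2^-1 * (gamma1 * ipH hH (g1 t) ((Dp - Dm) *m g1 t)
             + gamma2 * ipH hH (g2 t) ((Dp - Dm) *m g2 t))).
  move=> tT; rewrite -(energy_rate sbp (mass_eq t tT) (momentum_eq t tT)).
  apply: is_derive_energy => j; first exact/lt0r_neq0/hpos.
  - exact: (dhm t tT j).1.
  - exact: (dhm t tT j).2.
split; [|split].
- move=> t tT; split; first exact: dE.
  have [_ diss _ _] := sbp.
  have := mulr_ge0_le0 ge0_gamma1 (diss (g1 t)).
  have := mulr_ge0_le0 ge0_gamma2 (diss (g2 t)).
  lra.
- move=> gamma1_0 gamma2_0; apply: is_derive0_cst_itv => t tT.
  by apply: is_derive_eq (dE t tT) _; rewrite gamma1_0 gamma2_0 !mul0r addr0 mulr0.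
- move=> t tT; split.
  + have := is_derive_ipH hH ones h t (fun j => (dhm t tT j).1).
    by rewrite (mass_rate sbp (mass_eq t tT)).
  + have := is_derive_ipH hH ones m t (fun j => (dhm t tT j).2).
    by rewrite (momentum_rate sbp (momentum_eq t tT)).
Qed.
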